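(* Let $\boldsymbol{A}$ be the adjacency matrix of an undirected graph without self-loops on a finite vertex set $\boldsymbol{V}=\{1,\dots,N\}$. Let $\mathcal{R}_e\subset\boldsymbol{V}$ be a nonempty set of egos and $\mathcal{R}_a\subset\boldsymbol{V}\setminus\mathcal{R}_e$ a nonempty set of alters, $n_a=|\mathcal{R}_a|$, each alter $j$ having a unique recruiting ego $e(j)\in\mathcal{R}_e$ with $A_{j\,e(j)}=1$. Let $\widetilde{\boldsymbol{A}}$ have $\widetilde A_{ij}=\widetilde A_{ji}=1$ iff $i\in\mathcal{R}_a$ and $j=e(i)$ (other entries $0$). Let $\boldsymbol{Z}\in\{0,1\}^N$ have independent components with $\Pr(Z_i=1)=p_z\,\mathbb{I}\{i\in\mathcal{R}_e\}$, $p_z\in(0,1)$. Define $F_i=\mathbb{I}\{\sum_{j\neq i}Z_jA_{ij}>0\}$, $\widetilde F_i=\mathbb{I}\{\sum_{j\neq i}Z_j\widetilde A_{ij}>0\}$. Alters $i\in\mathcal{R}_a$ have fixed real potential outcomes $Y_i(0,f)$, $f\in\{0,1\}$, and observed outcome $Y_i=Y_i(0,F_i)$. Let $$IE=\frac1{n_a}\sum_{i\in\mathcal{R}_a}[Y_i(0,1)-Y_i(0,0)],\qquad \widehat{IE}=\frac1{n_a}\sum_{i\in\mathcal{R}_a}\Big[\frac{\mathbb{I}\{\widetilde F_i=1\}Y_i}{p_z}-\frac{\mathbb{I}\{\widetilde F_i=0\}Y_i}{1-p_z}\Big].$$ If $Y_i(0,1)\ge Y_i(0,0)$ for all $i\in\mathcal{R}_a$,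 then $0\le\mathbb{E}_{\boldsymbol{Z}}[\widehat{IE}]\le IE$; if $Y_i(0,1)\le Y_i(0,0)$ for all $i\in\mathcal{R}_a$, then $IE\le\mathbb{E}_{\boldsymbol{Z}}[\widehat{IE}]\le0$.
   Context: Design-based setting: everything except the treatment assignment $\boldsymbol{Z}$ is fixed, and expectations are over $\boldsymbol{Z}$. *)

From HB Require Import structures.
From mathcomp Require Import all_boot all_order all_algebra.
Set Implicit Arguments. Unset Strict Implicit. Unset Printing Implicit Defensive.
Import Order.TTheory GRing.Theory Num.Theory.
Local Open Scope ring_scope.

(* Vertices are 'I_N (i.e. {0,...,N-1}); treatment assignments are
   Z : {ffun 'I_N -> bool}. *)

Section Defs.
Variables (R : realFieldType) (N : nat).

Definition probZ (pz : R) (Re : {set 'I_N}) (Z : {ffun 'I_N -> bool}) : R :=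
  \prod_(i < N) (if i \in Re then (if Z i then pz else 1 - pz)
                 else (if Z i then 0 else 1)).

Definition EZ (pz : R) (Re : {set 'I_N}) (X : {ffun 'I_N -> bool} -> R) : R :=
  \sum_(Z : {ffun 'I_N -> bool}) probZ pz Re Z * X Z.

Definition exposure (A : 'M[R]_N) (Z : {ffun 'I_N -> bool}) (i : 'I_N) : bool :=
  0 < \sum_(j < N | j != i) (Z j)%:R * A i j.

Definition recruitA (Ra : {set 'I_N}) (e : 'I_N -> 'I_N) : 'M[R]_N :=
  \matrix_(i, j) (if ((i \in Ra) && (j == e i)) || ((j \in Ra) && (i == e j))
                  then 1 else 0).

(* Observed outcome Y_i = Y_i(0, F_i); Y0 i = Y_i(0,0), Y1 i = Y_i(0,1). *)
Definition obsY (A : 'M[R]_N) (Y0 Y1 : 'I_N -> R) (Z : {ffun 'I_N -> bool})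
  (i : 'I_N) : R := if exposure A Z i then Y1 i else Y0 i.

Definition IE (Ra : {set 'I_N}) (Y0 Y1 : 'I_N -> R) : R :=
  (#|Ra|%:R)^-1 * \sum_(i in Ra) (Y1 i - Y0 i).

Definition IEhat (pz : R) (A : 'M[R]_N) (Ra : {set 'I_N}) (e : 'I_N -> 'I_N)
  (Y0 Y1 : 'I_N -> R) (Z : {ffun 'I_N -> bool}) : R :=
  (#|Ra|%:R)^-1 * \sum_(i in Ra)
     ((if exposure (recruitA Ra e) Z i then 1 else 0) * obsY A Y0 Y1 Z i / pz
      - (if ~~ exposure (recruitA Ra e) Z i then 1 else 0) * obsY A Y0 Y1 Z i
          / (1 - pz)).

End Defs.

(* For an alter i with recruiter k = e i, the recruitment exposure is just
   Z_k, and Z_k = 1 forces F_i = 1 because i and k are adjacent.  Writing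
   Y_i = Y_i(0,1) - 1{F_i = 0} (Y_i(0,1) - Y_i(0,0)), the i-th summand of the
   estimator has expectation (Y_i(0,1) - Y_i(0,0)) Pr(F_i = 0) / (1 - p_z),
   and Pr(F_i = 0) <= Pr(Z_k = 0) = 1 - p_z.  So the expected estimator is
   an average of the individual effects shrunk by factors in [0, 1]. *)

From HB Require Import structures.
From mathcomp Require Import all_boot all_order all_algebra.
From mathcomp Require Import ring.
Set Implicit Arguments. Unset Strict Implicit. Unset Printing Implicit Defensive.
Import Order.TTheory GRing.Theory Num.Theory.
Local Open Scope ring_scope.

Section Expectation.
Variables (R : realFieldType) (N : nat) (pz : R) (Re : {set 'I_N}).

Implicit Types (X Y : {ffun 'I_N -> bool} -> R).

Lemma eq_EZ X Y : X =1 Y -> EZ pz Re X = EZ pz Re Y.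
Proof. by move=> eqXY; apply: eq_bigr => Z _; rewrite eqXY. Qed.

Lemma EZD X Y : EZ pz Re (fun Z => X Z + Y Z) = EZ pz Re X + EZ pz Re Y.
Proof. by rewrite /EZ -big_split; apply: eq_bigr => Z _; rewrite mulrDr. Qed.

Lemma EZMl c X : EZ pz Re (fun Z => c * X Z) = c * EZ pz Re X.
Proof. by rewrite /EZ mulr_sumr; apply: eq_bigr => Z _; rewrite mulrCA. Qed.

Lemma EZ_sum (I : finType) (P : pred I) (X : I -> {ffun 'I_N -> bool} -> R) :
  EZ pz Re (fun Z => \sum_(i | P i) X i Z) = \sum_(i | P i) EZ pz Re (X i).
Proof.
by rewrite /EZ exchange_big /=; apply: eq_bigr => Z _; rewrite mulr_sumr.
Qed.

Lemma EZ_marginal k (g : bool -> R) :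
  EZ pz Re (fun Z => g (Z k)) =
  if k \in Re then pz * g true + (1 - pz) * g false else g false.
Proof.
pose w i (b : bool) : R :=
  if i \in Re then (if b then pz else 1 - pz) else (if b then 0 else 1).
have w_sum i : w i true + w i false = 1.
  by rewrite /w; case: (i \in Re); rewrite ?addr0 ?add0r // addrC subrK.
(* Expanding the product over coordinates, each i != k contributes the
   factor w i true + w i false = 1. *)
transitivity (\sum_(Z : {ffun 'I_N -> bool})
    \prod_(i < N) (w i (Z i) * (if i == k then g (Z i) else 1))).
  by apply: eq_bigr => Z _; rewrite big_split /= -big_mkcond big_pred1_eq.
rewrite -(bigA_distr_bigA (fun i b => w i b * (if i == k then g b else 1))).
rewrite (bigD1 k) //= big_bool /= eqxx big1 ?mulr1 => [|i /negbTE ik].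
  by rewrite /w; case: (k \in Re); rewrite ?mul0r ?mul1r ?add0r.
by rewrite big_bool /= ik !mulr1 w_sum.
Qed.

Lemma EZ_treated k : k \in Re -> EZ pz Re (fun Z => (Z k)%:R) = pz.
Proof. by move=> kRe; rewrite (EZ_marginal k (fun b => b%:R)) kRe /=; ring. Qed.

Lemma EZ_untreated k : k \in Re -> EZ pz Re (fun Z => (~~ Z k)%:R) = 1 - pz.
Proof.
by move=> kRe; rewrite (EZ_marginal k (fun b => (~~ b)%:R)) kRe /=; ring.
Qed.

Hypothesis pz01 : 0 <= pz <= 1.

Lemma probZ_ge0 Z : 0 <= probZ pz Re Z.
Proof.
have [pz_ge0 pz_le1] := andP pz01.
by apply: prodr_ge0 => i _; case: (i \in Re); case: (Z i); rewrite ?subr_ge0.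
Qed.

Lemma EZ_ge0 X : (forall Z, 0 <= X Z) -> 0 <= EZ pz Re X.
Proof.
by move=> X_ge0; apply: sumr_ge0 => Z _; rewrite mulr_ge0 ?probZ_ge0.
Qed.

Lemma le_EZ X Y : (forall Z, X Z <= Y Z) -> EZ pz Re X <= EZ pz Re Y.
Proof. by move=> leXY; apply: ler_sum => Z _; rewrite ler_wpM2l ?probZ_ge0. Qed.

End Expectation.

Section Exposure.
Variables (R : realFieldType) (N : nat).
Implicit Type Z : {ffun 'I_N -> bool}.

Lemma exposure_recruitA (Re Ra : {set 'I_N}) (e : 'I_N -> 'I_N) Z i :
  [disjoint Ra & Re] -> (forall j, j \in Ra -> e j \in Re) -> i \in Ra ->
  exposure (recruitA R Ra e) Z i = Z (e i).
Proof.
move=> RaRe eRe iRa.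
have iNRe : i \in Re = false by rewrite (disjointFr RaRe iRa).
have ei_neq : e i != i by apply: contraTneq (eRe _ iRa) => ->; rewrite iNRe.
rewrite /exposure (bigD1 (e i)) //= big1 ?addr0 => [|j /andP[_ /negbTE je]].
  by rewrite mxE iRa eqxx mulr1; case: (Z (e i)); rewrite ?ltr01 ?ltxx.
rewrite mxE iRa je /=; case jRa: (j \in Ra); last by rewrite mulr0.
by case: eqP => [ie|]; rewrite ?mulr0 //; move: (eRe _ jRa); rewrite -ie iNRe.
Qed.

Lemma exposure_treated_neighbour (A : 'M[R]_N) Z i k :
  (forall j, 0 <= A i j) -> 0 < A i k -> k != i -> Z k -> exposure A Z i.
Proof.
move=> A_ge0 Aik ki Zk; rewrite /exposure (bigD1 k) //= Zk mul1r ltr_pwDl //.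
by apply: sumr_ge0 => j _; rewrite mulr_ge0.
Qed.

End Exposure.

Section Shrinkage.
Variables (R : realDomainType) (I : finType) (P : pred I) (d c : I -> R).
Hypothesis c01 : forall i, P i -> 0 <= c i <= 1.

Lemma sum_shrink_ge0 : (forall i, P i -> 0 <= d i) ->
  0 <= \sum_(i | P i) d i * c i <= \sum_(i | P i) d i.
Proof.
move=> d_ge0; apply/andP; split.
- apply: sumr_ge0 => i Pi; have /andP[c_ge0 _] := c01 Pi.
  by rewrite mulr_ge0 ?d_ge0.
- apply: ler_sum => i Pi; have /andP[_ c_le1] := c01 Pi.
  by rewrite ler_piMr ?d_ge0.
Qed.

Lemma sum_shrink_le0 : (forall i, P i -> d i <= 0) ->
  \sum_(i | P i) d i <= \sum_(i | P i) d i * c i <= 0.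
Proof.
move=> d_le0; apply/andP; split.
- apply: ler_sum => i Pi; have /andP[_ c_le1] := c01 Pi.
  by rewrite ler_niMr ?d_le0.
- apply: sumr_le0 => i Pi; have /andP[c_ge0 _] := c01 Pi.
  by rewrite mulr_le0_ge0 ?d_le0.
Qed.

End Shrinkage.

Section Estimator.
Variables (R : realFieldType) (N : nat) (A : 'M[R]_N).
Variables (Re Ra : {set 'I_N}) (e : 'I_N -> 'I_N) (pz : R) (Y0 Y1 : 'I_N -> R).

Hypothesis A01 : forall i j, A i j = 0 \/ A i j = 1.
Hypothesis RaRe : [disjoint Ra & Re].
Hypothesis recruiter : forall j, j \in Ra -> e j \in Re /\ A j (e j) = 1.
Hypothesis pz_gt0 : 0 < pz.
Hypothesis pz_lt1 : pz < 1.
Implicit Type Z : {ffun 'I_N -> bool}.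

Definition IEhat_term Z i : R :=
  (if exposure (recruitA R Ra e) Z i then 1 else 0) * obsY A Y0 Y1 Z i / pz
  - (if ~~ exposure (recruitA R Ra e) Z i then 1 else 0) * obsY A Y0 Y1 Z i
      / (1 - pz).

Definition unexposed_ratio i : R :=
  EZ pz Re (fun Z => (~~ exposure A Z i)%:R) / (1 - pz).

Let pz01 : 0 <= pz <= 1. Proof. by rewrite !ltW. Qed.
Let qz_gt0 : 0 < 1 - pz. Proof. by rewrite subr_gt0. Qed.

Lemma exposure_recruiter_treated Z i : i \in Ra -> Z (e i) -> exposure A Z i.
Proof.
move=> iRa; have [eiRe Aiei] := recruiter iRa.
have A_ge0 j : 0 <= A i j by case: (A01 i j) => ->.
have ei_neq : e i != i.
  by apply: contraTneq eiRe => ->; rewrite (disjointFr RaRe iRa).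
by apply: exposure_treated_neighbour A_ge0 _ ei_neq; rewrite Aiei ltr01.
Qed.

Lemma IEhat_termE i Z : i \in Ra ->
  IEhat_term Z i =
    Y1 i / pz * (Z (e i))%:R + (- Y1 i) / (1 - pz) * (~~ Z (e i))%:R
    + (Y1 i - Y0 i) / (1 - pz) * (~~ exposure A Z i)%:R.
Proof.
move=> iRa; have eRe j : j \in Ra -> e j \in Re by case/recruiter.
rewrite /IEhat_term /obsY (exposure_recruitA R Z RaRe eRe iRa).
case Zei: (Z (e i)) => /=.
  by rewrite exposure_recruiter_treated //=; ring.
by case: (exposure A Z i) => /=; ring.
Qed.

Lemma EZ_IEhat_term i : i \in Ra ->
  EZ pz Re (fun Z => IEhat_term Z i) = (Y1 i - Y0 i) * unexposed_ratio i.
Proof.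
move=> iRa; have [eiRe _] := recruiter iRa.
under eq_EZ do rewrite IEhat_termE //.
rewrite !EZD !EZMl EZ_treated // EZ_untreated // /unexposed_ratio.
by field; rewrite !lt0r_neq0.
Qed.

Lemma unexposed_ratio01 i : i \in Ra -> 0 <= unexposed_ratio i <= 1.
Proof.
move=> iRa; have [eiRe _] := recruiter iRa.
have unexposed_ge0 : 0 <= EZ pz Re (fun Z => (~~ exposure A Z i)%:R).
  by apply: (EZ_ge0 Re pz01) => Z; case: (~~ _).
rewrite divr_ge0 ?(ltW qz_gt0) //= ler_pdivrMr // mul1r -(EZ_untreated pz eiRe).
apply: (le_EZ Re pz01) => Z; case Zei: (Z (e i)) => /=.
  by rewrite exposure_recruiter_treated.
by case: (~~ _).
Qed.

Lemma EZ_IEhat : EZ pz Re (IEhat pz A Ra e Y0 Y1) =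
  #|Ra|%:R^-1 * \sum_(i in Ra) (Y1 i - Y0 i) * unexposed_ratio i.
Proof.
rewrite /IEhat EZMl EZ_sum; congr (_ * _).
by apply: eq_bigr => i /EZ_IEhat_term.
Qed.

End Estimator.

Theorem mainTheorem4 (R : realFieldType) (N : nat) (A : 'M[R]_N)
  (Re Ra : {set 'I_N}) (e : 'I_N -> 'I_N) (pz : R) (Y0 Y1 : 'I_N -> R) :
  (forall i j, A i j = 0 \/ A i j = 1) ->
  (forall i j, A i j = A j i) ->
  (forall i, A i i = 0) ->
  Re != set0 -> Ra != set0 -> [disjoint Ra & Re] ->
  (forall j, j \in Ra -> e j \in Re /\ A j (e j) = 1) ->
  0 < pz < 1 ->
  ((forall i, i \in Ra -> Y0 i <= Y1 i) ->
     0 <= EZ pz Re (IEhat pz A Ra e Y0 Y1) <= IE Ra Y0 Y1) /\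
  ((forall i, i \in Ra -> Y1 i <= Y0 i) ->
     IE Ra Y0 Y1 <= EZ pz Re (IEhat pz A Ra e Y0 Y1) <= 0).
Proof.
move=> A01 _ _ _ _ RaRe recruiter /andP[pz_gt0 pz_lt1].
rewrite (EZ_IEhat Y0 Y1 A01 RaRe recruiter pz_gt0 pz_lt1) /IE.
have ratio01 := unexposed_ratio01 A01 RaRe recruiter pz_gt0 pz_lt1.
have inv_ge0 : 0 <= (#|Ra|%:R : R)^-1 by rewrite invr_ge0.
split => Y_le.
- have effect_ge0 i : i \in Ra -> 0 <= Y1 i - Y0 i.
    by move/Y_le; rewrite subr_ge0.
  have /andP[lo hi] := sum_shrink_ge0 ratio01 effect_ge0.
  by rewrite mulr_ge0 ?ler_wpM2l.
- have effect_le0 i : i \in Ra -> Y1 i - Y0 i <= 0.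
    by move/Y_le; rewrite subr_le0.
  have /andP[lo hi] := sum_shrink_le0 ratio01 effect_le0.
  by rewrite mulr_ge0_le0 ?ler_wpM2l.
Qed.
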